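(* In the setting where $X_1,\dots,X_n$ are i.i.d. from $p\in\Delta([k])$, $b_1,\dots,b_n$ are the $\varepsilon$-RAPPOR outputs, $N_x=\sum_{j=1}^n\mathbf 1\{b_{jx}=1\}$, $\lambda=\alpha_R/k+\beta_R$ and $T=\sum_{x\in[k]}\big((N_x-(n-1)\lambda)^2-N_x\big)+k(n-1)\lambda^2$, we have $$\mathrm{Var}[T]\le 4kn^2+8n^3\alpha_R^2\|p-u\|_2^2.$$
   Context: $\Delta([k])$ is the set of probability distributions on $[k]=\{1,\dots,k\}$, $u$ the uniform distribution on $[k]$. The $\varepsilon$-RAPPOR mechanism ($\varepsilon>0$) maps $x\in[k]$ to a random vector $b\in\{0,1\}^k$ obtained from the one-hot vector $e_x$ by flipping each coordinate independently with probability $\beta_R=1/(e^{\varepsilon/2}+1)$; the mechanism is applied independently for each user. Set $\alpha_R=(e^{\varepsilon/2}-1)/(e^{\varepsilon/2}+1)$. *)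

From HB Require Import structures.
From Stdlib Require Import Reals.
From mathcomp Require Import all_boot.
Set Implicit Arguments. Unset Strict Implicit. Unset Printing Implicit Defensive.
Local Open Scope R_scope.

Definition betaR (eps : R) : R := / (exp (eps / 2) + 1).
Definition alphaR (eps : R) : R := (exp (eps / 2) - 1) / (exp (eps / 2) + 1).

Definition is_dist (k : nat) (p : 'I_k -> R) : Prop :=
  (forall i, 0 <= p i) /\ \big[Rplus/0]_(i < k) p i = 1.

(* Joint outcome: inputs X_1..X_n and RAPPOR outputs b_1..b_n in {0,1}^k *)
Definition sample (k n : nat) : finType :=
  ({ffun 'I_n -> 'I_k} * {ffun 'I_n -> {ffun 'I_k -> bool}})%type.

(* probability that a bit of e_x is reported as [bit] given its true value [target] *)
Definition flip_prob (eps : R) (bit target : bool) : R :=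
  if bit == target then 1 - betaR eps else betaR eps.

Definition prob (k n : nat) (p : 'I_k -> R) (eps : R) (w : sample k n) : R :=
  \big[Rmult/1]_(j < n)
     (p (w.1 j) * \big[Rmult/1]_(x < k) flip_prob eps (w.2 j x) (x == w.1 j)).

Definition Exp (k n : nat) (p : 'I_k -> R) (eps : R) (f : sample k n -> R) : R :=
  \big[Rplus/0]_(w : sample k n) (prob p eps w * f w).

Definition Var (k n : nat) (p : 'I_k -> R) (eps : R) (f : sample k n -> R) : R :=
  Exp p eps (fun w => (f w - Exp p eps f) ^ 2).

Definition Ncount (k n : nat) (w : sample k n) (x : 'I_k) : R :=
  \big[Rplus/0]_(j < n) (if w.2 j x then 1 else 0).

Definition lam (k : nat) (eps : R) : R := alphaR eps / INR k + betaR eps.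

Definition Tstat (k n : nat) (eps : R) (w : sample k n) : R :=
  \big[Rplus/0]_(x < k)
     ((Ncount w x - (INR n - 1) * lam k eps) ^ 2 - Ncount w x)
  + INR k * (INR n - 1) * (lam k eps) ^ 2.

Definition dist2_unif (k : nat) (p : 'I_k -> R) : R :=
  \big[Rplus/0]_(x < k) (p x - / INR k) ^ 2.

(* Write B_jx for bit x of the report of user j, q_x = beta + alpha p_x for its
   mean, Z_jx = B_jx - q_x, and mu_x = q_x - lambda = alpha (p_x - 1/k).
   Substituting N_x = n q_x + sum_j Z_jx into T gives the exact identity
     T = n(n-1) sum_x mu_x^2 + A + B,
     A = sum_{j <> l} sum_x Z_jx Z_lx,   B = 2(n-1) sum_j sum_x mu_x Z_jx.
   The users are independent and the Z_jx are centred, so a moment vanishes as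
   soon as some user occurs in it only once.  Hence E[AB] = 0,
   E[A^2] = 2n(n-1) sum_xy C_xy^2 and E[B^2] = 4n(n-1)^2 sum_xy mu_x mu_y C_xy,
   where C = diag(q - q^2 + alpha^2 p^2) - alpha^2 p p^T is the covariance of one
   report.  Finally sum_xy C_xy^2 <= k + 1 <= 2k and mu^T C mu <= 2 |mu|^2 =
   2 alpha^2 |p - u|^2, while Var T <= E[(T - n(n-1) |mu|^2)^2]. *)

From Stdlib Require Import Reals Lra Psatz.
From mathcomp Require Import all_boot.
From HB Require Import structures.
Set Implicit Arguments. Unset Strict Implicit. Unset Printing Implicit Defensive.
Local Open Scope R_scope.

HB.instance Definition _ := Monoid.isComLaw.Build R 0 Rplus
  (fun a b c => esym (Rplus_assoc a b c)) Rplus_comm Rplus_0_l.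
HB.instance Definition _ := Monoid.isComLaw.Build R 1 Rmult
  (fun a b c => esym (Rmult_assoc a b c)) Rmult_comm Rmult_1_l.
HB.instance Definition _ := Monoid.isMulLaw.Build R 0 Rmult Rmult_0_l Rmult_0_r.
HB.instance Definition _ := Monoid.isAddLaw.Build R Rmult Rplus
  Rmult_plus_distr_r Rmult_plus_distr_l.

Definition ind (b : bool) : R := if b then 1 else 0.

Lemma sum_ind_eq (I : finType) (x : I) (F : I -> R) :
  \big[Rplus/0]_z (ind (z == x) * F z) = F x.
Proof.
rewrite (bigD1 x) //= eqxx big1 => [|z /negbTE ->]; rewrite /ind; ring.
Qed.

Lemma prod_if_eq (I : finType) (x : I) (F : I -> R) :
  \big[Rmult/1]_z (if z == x then F z else 1) = F x.
Proof. by rewrite -big_mkcond big_pred1_eq. Qed.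

Lemma sum_const_R m c : \big[Rplus/0]_(i < m) c = INR m * c.
Proof.
elim: m => [|m IH]; first by rewrite big_ord0 /=; ring.
by rewrite S_INR big_ord_recr IH /=; ring.
Qed.

Lemma ler_sum (I : finType) (F G : I -> R) :
  (forall i, F i <= G i) -> \big[Rplus/0]_i F i <= \big[Rplus/0]_i G i.
Proof. by move=> FG; apply: (big_ind2 Rle) => //; [exact: Rle_refl | move=> *; lra]. Qed.

Lemma sum_ge0 (I : finType) (P : pred I) (F : I -> R) :
  (forall i, P i -> 0 <= F i) -> 0 <= \big[Rplus/0]_(i | P i) F i.
Proof. by move=> F0; apply: big_ind => //; [exact: Rle_refl | move=> *; lra]. Qed.

Section Expectation.
Variables (k n : nat) (p : 'I_k -> R) (eps : R).
Implicit Types f g : sample k n -> R.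

Local Notation E := (@Exp k n p eps).

Lemma eq_Exp f g : (forall w, f w = g w) -> E f = E g.
Proof. by move=> fg; apply: eq_bigr => w _; rewrite fg. Qed.

Lemma ExpD f g : E (fun w => f w + g w) = E f + E g.
Proof. by rewrite /Exp -big_split; apply: eq_bigr => w _ /=; ring. Qed.

Lemma ExpZ c f : E (fun w => c * f w) = c * E f.
Proof. by rewrite /Exp big_distrr; apply: eq_bigr => w _ /=; ring. Qed.

Lemma Exp_sum (I : finType) (F : I -> sample k n -> R) :
  E (fun w => \big[Rplus/0]_i F i w) = \big[Rplus/0]_i E (F i).
Proof. by rewrite /Exp exchange_big; apply: eq_bigr => w _; rewrite big_distrr. Qed.

Lemma Var_le_Exp_sq_dev f c :
  E (fun _ => 1) = 1 -> Var p eps f <= E (fun w => (f w - c) ^ 2).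
Proof.
move=> E1; set m := E f.
have -> : Var p eps f = E (fun w => (f w - c) ^ 2) - (m - c) ^ 2.
  rewrite /Var -/m.
  transitivity (E (fun w => (f w - c) ^ 2 + (2 * (c - m) * f w + (m ^ 2 - c ^ 2) * 1))).
    by apply: eq_Exp => w; ring.
  by rewrite !ExpD !ExpZ E1 -/m; ring.
have := pow2_ge_0 (m - c); lra.
Qed.

End Expectation.

Section OneUser.
Variables (k : nat) (p : 'I_k -> R) (eps : R).

Definition user := ('I_k * {ffun 'I_k -> bool})%type.

Definition user_prob (u : user) : R :=
  p u.1 * \big[Rmult/1]_(x < k) flip_prob eps (u.2 x) (x == u.1).

Definition Euser (f : user -> R) : R :=
  \big[Rplus/0]_(u : user) (user_prob u * f u).

End OneUser.

Section Independence.
Variables (k n : nat) (p : 'I_k -> R) (eps : R).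

Local Notation E := (@Exp k n p eps).
Local Notation Eu := (Euser p eps).

Definition user_of (w : sample k n) (j : 'I_n) : user k := (w.1 j, w.2 j).

Lemma Exp_prod_users (G : 'I_n -> user k -> R) :
  E (fun w => \big[Rmult/1]_j G j (user_of w j)) = \big[Rmult/1]_j Eu (G j).
Proof.
pose H j (a : 'I_k) (b : {ffun 'I_k -> bool}) := user_prob p eps (a, b) * G j (a, b).
transitivity (\big[Rplus/0]_(X : {ffun 'I_n -> 'I_k})
              \big[Rplus/0]_(B : {ffun 'I_n -> {ffun 'I_k -> bool}})
              \big[Rmult/1]_j H j (X j) (B j)).
  by rewrite /Exp pair_bigA; apply: eq_bigr => -[X B] _; rewrite big_split.
under [LHS]eq_bigr => X _ do rewrite -(bigA_distr_bigA (fun j => H j (X j))).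
rewrite -(bigA_distr_bigA (fun j a => \big[Rplus/0]_b H j a b)).
by apply: eq_bigr => j _; rewrite pair_bigA; apply: eq_bigr => -[a b].
Qed.

Lemma Exp_prod_seq (s : seq ('I_n * (user k -> R))) :
  E (fun w => \big[Rmult/1]_(t <- s) t.2 (user_of w t.1)) =
  \big[Rmult/1]_j Eu (fun u => \big[Rmult/1]_(t <- s | t.1 == j) t.2 u).
Proof.
rewrite -Exp_prod_users; apply: eq_Exp => w.
under [RHS]eq_bigr do rewrite big_mkcond.
rewrite exchange_big; apply: eq_bigr => t _.
by rewrite -(prod_if_eq t.1 (fun j => t.2 (user_of w j))); apply: eq_bigr => j _; rewrite eq_sym.
Qed.

End Independence.

Lemma flip_prob_sum e c : flip_prob e true c + flip_prob e false c = 1.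
Proof. by rewrite /flip_prob; case: c => /=; ring. Qed.

Lemma alphaR_betaR e : alphaR e = 1 - 2 * betaR e.
Proof. have := exp_pos (e / 2); rewrite /alphaR /betaR => ?; field; lra. Qed.

Lemma flip_prob_true e c : flip_prob e true c = betaR e + alphaR e * ind c.
Proof. by rewrite /flip_prob /ind alphaR_betaR; case: c => /=; ring. Qed.

Section OneUserMoments.
Variables (k : nat) (p : 'I_k -> R) (eps : R).
Hypothesis p_dist : is_dist p.
Implicit Types f g : user k -> R.

Local Notation Eu := (Euser p eps).

Lemma eq_Euser f g : (forall u, f u = g u) -> Eu f = Eu g.
Proof. by move=> fg; apply: eq_bigr => u _; rewrite fg. Qed.

Lemma EuserD f g : Eu (fun u => f u + g u) = Eu f + Eu g.
Proof. by rewrite /Euser -big_split; apply: eq_bigr => u _ /=; ring. Qed.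

Lemma EuserZ c f : Eu (fun u => c * f u) = c * Eu f.
Proof. by rewrite /Euser big_distrr; apply: eq_bigr => u _ /=; ring. Qed.

Definition bit (x : 'I_k) (u : user k) : R := ind (u.2 x).

Lemma Euser_prod_bits (S : pred 'I_k) :
  Eu (fun u => \big[Rmult/1]_(z | S z) bit z u) =
  \big[Rplus/0]_(a : 'I_k) (p a * \big[Rmult/1]_(z : 'I_k | S z) flip_prob eps true (z == a)).
Proof.
rewrite /Euser -(pair_bigA _ (fun (a : 'I_k) (b : {ffun 'I_k -> bool}) =>
  user_prob p eps (a, b) * \big[Rmult/1]_(z | S z) bit z (a, b))).
apply: eq_bigr => a _ /=.
transitivity (p a * \big[Rplus/0]_(b : {ffun 'I_k -> bool}) \big[Rmult/1]_z
   (flip_prob eps (b z) (z == a) * (if S z then ind (b z) else 1))).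
  rewrite big_distrr; apply: eq_bigr => b _; rewrite /user_prob big_split /=.
  by rewrite [X in _ * X]big_mkcond Rmult_assoc.
rewrite -(bigA_distr_bigA (fun (z : 'I_k) (bt : bool) => flip_prob eps bt (z == a) *
  (if S z then ind bt else 1))) [X in _ = _ * X]big_mkcond.
congr (_ * _); apply: eq_bigr => z _; rewrite big_bool /= /ind.
by case: (S z); rewrite ?Rmult_1_r ?flip_prob_sum // Rmult_0_r Rplus_0_r.
Qed.

Lemma sum_p : \big[Rplus/0]_a p a = 1.
Proof. by case: p_dist. Qed.

Lemma Euser1 : Eu (fun _ => 1) = 1.
Proof.
have := Euser_prod_bits xpred0; under eq_Euser do rewrite big_pred0 //.
by move=> ->; under eq_bigr do rewrite big_pred0 // Rmult_1_r; exact: sum_p.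
Qed.

End OneUserMoments.

Lemma prod_pred2 (I : finType) (x y : I) (F : I -> R) : x != y ->
  \big[Rmult/1]_(z | (z == x) || (z == y)) F z = F x * F y.
Proof.
move=> xy; rewrite (bigD1 x) ?eqxx //= (big_pred1 y) // => z /=.
by case: eqP => [->|]; rewrite ?(negbTE xy) ?eqxx ?andbF ?andbT ?orbF.
Qed.

Lemma ind_eq_mul0 (I : eqType) (x y a : I) : x != y -> ind (x == a) * ind (y == a) = 0.
Proof.
move=> xy; rewrite /ind; case: eqP => [<-|_]; last ring.
by rewrite eq_sym (negbTE xy); ring.
Qed.

Section Covariance.
Variables (k : nat) (p : 'I_k -> R) (eps : R).
Hypothesis p_dist : is_dist p.

Local Notation Eu := (Euser p eps).
Local Notation alpha := (alphaR eps).
Local Notation beta := (betaR eps).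

Definition bit_mean (x : 'I_k) : R := beta + alpha * p x.

Lemma sum_p_ind (x : 'I_k) : \big[Rplus/0]_a (p a * ind (x == a)) = p x.
Proof. by rewrite -(sum_ind_eq x p); apply: eq_bigr => a _; rewrite eq_sym Rmult_comm. Qed.

Lemma Euser_bit (x : 'I_k) : Eu (bit x) = bit_mean x.
Proof.
have := Euser_prod_bits p eps (pred1 x); under eq_Euser do rewrite big_pred1_eq.
move=> ->; under eq_bigr do rewrite big_pred1_eq flip_prob_true.
transitivity (\big[Rplus/0]_a (beta * p a + alpha * (p a * ind (x == a)))).
  by apply: eq_bigr => a _; ring.
by rewrite big_split -!big_distrr /= sum_p // sum_p_ind /bit_mean; ring.
Qed.

Lemma Euser_bit2 (x y : 'I_k) : x != y ->
  Eu (fun u => bit x u * bit y u) = beta ^ 2 + alpha * beta * (p x + p y).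
Proof.
move=> xy; have := Euser_prod_bits p eps (pred2 x y).
under eq_Euser do rewrite prod_pred2 //.
move=> ->; under eq_bigr do rewrite prod_pred2 // !flip_prob_true.
transitivity (\big[Rplus/0]_a (beta ^ 2 * p a + alpha * beta * (p a * ind (x == a))
  + alpha * beta * (p a * ind (y == a)))).
  apply: eq_bigr => a _.
  have := ind_eq_mul0 a xy; set I := ind (x == a); set J := ind (y == a) => IJ0.
  rewrite -[RHS]Rplus_0_r -(Rmult_0_r (alpha ^ 2 * p a)) -IJ0; ring.
by rewrite !big_split -!big_distrr /= sum_p // !sum_p_ind; ring.
Qed.

Definition cbit (x : 'I_k) (u : user k) : R := bit x u - bit_mean x.

Definition cov (x y : 'I_k) : R := Eu (fun u => cbit x u * cbit y u).

Lemma Euser_cbit (x : 'I_k) : Eu (cbit x) = 0.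
Proof.
transitivity (Eu (fun u => bit x u + - bit_mean x * 1)).
  by apply: eq_Euser => u; rewrite /cbit; ring.
by rewrite EuserD EuserZ Euser1 // Euser_bit; ring.
Qed.

Lemma covE (x y : 'I_k) :
  cov x y = ind (x == y) * (bit_mean x - bit_mean x ^ 2 + alpha ^ 2 * p x ^ 2)
            - alpha ^ 2 * p x * p y.
Proof.
have -> : cov x y = Eu (fun u => bit x u * bit y u) - bit_mean x * bit_mean y.
  transitivity (Eu (fun u => bit x u * bit y u + (- bit_mean y * bit x u
    + (- bit_mean x * bit y u + bit_mean x * bit_mean y * 1)))).
    by apply: eq_Euser => u; rewrite /cbit; ring.
  by rewrite !EuserD !EuserZ Euser1 // !Euser_bit; ring.
case: (eqVneq x y) => [<-|xy].
  have bit_idem u : bit x u * bit x u = bit x u by rewrite /bit /ind; case: (u.2 x); ring.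
  by under eq_Euser do rewrite bit_idem; rewrite Euser_bit /ind; ring.
by rewrite Euser_bit2 // /ind /bit_mean alphaR_betaR; ring.
Qed.

End Covariance.

Section Moments.
Variables (k n : nat) (p : 'I_k -> R) (eps : R).
Hypothesis p_dist : is_dist p.

Local Notation E := (@Exp k n p eps).
Local Notation Eu := (Euser p eps).

Lemma prod_users_off (s : seq ('I_n * (user k -> R))) (m : 'I_n) u :
  all (fun t => t.1 != m) s -> \big[Rmult/1]_(t <- s | t.1 == m) t.2 u = 1.
Proof.
by move=> s_m; rewrite big_hasC // -all_predC; apply: sub_all s_m => t /=; rewrite eq_sym.
Qed.

Lemma Euser_prod_off (s : seq ('I_n * (user k -> R))) (m : 'I_n) :
  all (fun t => t.1 != m) s ->
  Eu (fun u => \big[Rmult/1]_(t <- s | t.1 == m) t.2 u) = 1.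
Proof.
by move=> s_m; rewrite -[RHS](Euser1 eps p_dist); apply: eq_Euser => u; apply: prod_users_off.
Qed.

Lemma Exp1 : E (fun _ => 1) = 1.
Proof.
transitivity (E (fun w =>
  \big[Rmult/1]_(t <- [::] : seq ('I_n * (user k -> R))) t.2 (user_of w t.1))).
  by apply: eq_Exp => w; rewrite big_nil.
by rewrite Exp_prod_seq big1 // => j _; apply: Euser_prod_off.
Qed.

Lemma Exp_user (j : 'I_n) (f : user k -> R) : E (fun w => f (user_of w j)) = Eu f.
Proof.
transitivity (E (fun w => \big[Rmult/1]_(t <- [:: (j, f)]) t.2 (user_of w t.1))).
  by apply: eq_Exp => w; rewrite big_seq1.
rewrite Exp_prod_seq (bigD1 j) //= big1 => [|m mj]; last first.
  by apply: Euser_prod_off; rewrite /= eq_sym mj.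
by rewrite Rmult_1_r; apply: eq_Euser => u; rewrite big_cons eqxx big_nil Rmult_1_r.
Qed.

Lemma Exp_user2 (j l : 'I_n) (f g : user k -> R) : j != l ->
  E (fun w => f (user_of w j) * g (user_of w l)) = Eu f * Eu g.
Proof.
move=> jl; have lj : l != j by rewrite eq_sym.
transitivity (E (fun w => \big[Rmult/1]_(t <- [:: (j, f); (l, g)]) t.2 (user_of w t.1))).
  by apply: eq_Exp => w; rewrite big_cons big_seq1.
rewrite Exp_prod_seq (bigD1 j) // (bigD1 l) //= big1 => [|m /andP [mj ml]]; last first.
  by apply: Euser_prod_off; rewrite /= !(eq_sym _ m) mj ml.
rewrite Rmult_1_r; congr (_ * _); apply: eq_Euser => u.
  by rewrite !big_cons big_nil /= eqxx (negbTE lj) Rmult_1_r.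
by rewrite !big_cons big_nil /= eqxx (negbTE jl) Rmult_1_r.
Qed.

Lemma Exp_lone_centered (i : 'I_n) (f : user k -> R) (s : seq ('I_n * (user k -> R))) :
  Eu f = 0 -> all (fun t => t.1 != i) s ->
  E (fun w => f (user_of w i) * \big[Rmult/1]_(t <- s) t.2 (user_of w t.1)) = 0.
Proof.
move=> f0 s_i.
transitivity (E (fun w => \big[Rmult/1]_(t <- (i, f) :: s) t.2 (user_of w t.1))).
  by apply: eq_Exp => w; rewrite big_cons.
rewrite Exp_prod_seq (bigD1 i) //=.
have -> : Eu (fun u => \big[Rmult/1]_(t <- (i, f) :: s | t.1 == i) t.2 u) = 0.
  by rewrite -f0; apply: eq_Euser => u; rewrite big_cons eqxx prod_users_off ?Rmult_1_r.
exact: Rmult_0_l.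
Qed.

Definition Zbit (j : 'I_n) (x : 'I_k) (w : sample k n) : R := cbit p eps x (user_of w j).

Lemma Exp_Zbit_lone (i : 'I_n) (x : 'I_k) (s : seq ('I_n * 'I_k)) : all (fun t => t.1 != i) s ->
  E (fun w => Zbit i x w * \big[Rmult/1]_(t <- s) Zbit t.1 t.2 w) = 0.
Proof.
move=> s_i.
transitivity (E (fun w => cbit p eps x (user_of w i) *
  \big[Rmult/1]_(t <- [seq (t.1, cbit p eps t.2) | t <- s]) t.2 (user_of w t.1))).
  by apply: eq_Exp => w; rewrite big_map.
by apply: Exp_lone_centered; [exact: Euser_cbit | rewrite all_map].
Qed.

Lemma Exp_Zbit2 (j m : 'I_n) (x y : 'I_k) :
  E (fun w => Zbit j x w * Zbit m y w) = ind (j == m) * cov p eps x y.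
Proof.
case: (eqVneq j m) => [<-|jm].
  by rewrite /ind Rmult_1_l; exact: (Exp_user j (fun u => cbit p eps x u * cbit p eps y u)).
transitivity (E (fun w => Zbit j x w * \big[Rmult/1]_(t <- [:: (m, y)]) Zbit t.1 t.2 w)).
  by apply: eq_Exp => w; rewrite big_seq1.
by rewrite Exp_Zbit_lone /= 1?eq_sym ?jm // /ind Rmult_0_l.
Qed.

Lemma Exp_Zbit3 (j l m : 'I_n) (x y : 'I_k) : j != l ->
  E (fun w => Zbit j x w * Zbit l x w * Zbit m y w) = 0.
Proof.
move=> jl; case: (eqVneq m j) => [->|mj].
  rewrite -(Exp_Zbit_lone (i := l) x (s := [:: (j, x); (j, y)])) /=; last first.
    by rewrite jl.
  by apply: eq_Exp => w; rewrite !big_cons big_nil /=; ring.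
rewrite -(Exp_Zbit_lone (i := j) x (s := [:: (l, x); (m, y)])) /=; last first.
  by rewrite eq_sym jl mj.
by apply: eq_Exp => w; rewrite !big_cons big_nil /=; ring.
Qed.

Lemma Exp_Zbit4 (j l j' l' : 'I_n) (x y : 'I_k) : j != l -> j' != l' ->
  E (fun w => Zbit j x w * Zbit l x w * (Zbit j' y w * Zbit l' y w)) =
  (ind (j' == j) * ind (l' == l) + ind (j' == l) * ind (l' == j)) * cov p eps x y ^ 2.
Proof.
move=> jl jl'; set M := fun a b => E (fun w => Zbit j x w * Zbit l x w * (Zbit a y w * Zbit b y w)).
have M_sym a b : M a b = M b a by apply: eq_Exp => w; ring.
have M_lone a b : a != b -> a != j -> a != l -> M a b = 0.
  move=> ab aj al; rewrite -(Exp_Zbit_lone (i := a) y (s := [:: (j, x); (l, x); (b, y)])).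
    by apply: eq_Exp => w; rewrite !big_cons big_nil /=; ring.
  by rewrite /= !(eq_sym _ a) aj al ab.
have M_jl : M j l = cov p eps x y ^ 2.
  pose f u := cbit p eps x u * cbit p eps y u.
  transitivity (E (fun w => f (user_of w j) * f (user_of w l))).
    by apply: eq_Exp => w; rewrite /f /Zbit; ring.
  by rewrite Exp_user2 // /= Rmult_1_r.
have lj : l != j by rewrite eq_sym.
rewrite -/(M j' l'); case: (eqVneq j' j) => [eq_j'j|j'j].
  subst j'; rewrite (negbTE jl); case: (eqVneq l' l) => [->|l'l].
    by rewrite (negbTE lj) M_jl /=; ring.
  have l'j : l' != j by rewrite eq_sym.
  by rewrite M_sym M_lone //=; ring.
case: (eqVneq j' l) => [eq_j'l|j'l].
  subst j'; case: (eqVneq l' j) => [->|l'j].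
    by rewrite M_sym M_jl (negbTE jl) /=; ring.
  have l'l : l' != l by rewrite eq_sym.
  by rewrite M_sym M_lone //=; ring.
by rewrite M_lone //=; ring.
Qed.

End Moments.

Lemma Exp_mul_sums k n (p : 'I_k -> R) eps (I J : finType)
    (F : I -> sample k n -> R) (G : J -> sample k n -> R) :
  Exp p eps (fun w => \big[Rplus/0]_i F i w * \big[Rplus/0]_j G j w) =
  \big[Rplus/0]_i \big[Rplus/0]_j Exp p eps (fun w => F i w * G j w).
Proof.
under eq_Exp => w do rewrite big_distrlr.
by rewrite Exp_sum; under eq_bigr do rewrite Exp_sum.
Qed.

Lemma sum2_ind_eq (I J : finType) (a : I) (b : J) (G : I -> J -> R) :
  \big[Rplus/0]_i \big[Rplus/0]_j (ind (i == a) * ind (j == b) * G i j) = G a b.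
Proof.
rewrite -(sum_ind_eq a (fun i => G i b)); apply: eq_bigr => i _.
by rewrite -(sum_ind_eq b (G i)) big_distrr; apply: eq_bigr => j _ /=; ring.
Qed.

Lemma Exp_sum_mull k n (p : 'I_k -> R) eps (I : finType)
    (F : I -> sample k n -> R) (g : sample k n -> R) :
  Exp p eps (fun w => \big[Rplus/0]_i F i w * g w) =
  \big[Rplus/0]_i Exp p eps (fun w => F i w * g w).
Proof. by under eq_Exp => w do rewrite big_distrl; rewrite Exp_sum. Qed.

Section Offdiagonal.
Variable n : nat.

Definition offdiag (j l : 'I_n) : R := 1 - ind (j == l).
Lemma offdiag_sym (j l : 'I_n) : offdiag l j = offdiag j l.
Proof. by rewrite /offdiag eq_sym. Qed.

Lemma offdiag_idem (j l : 'I_n) : offdiag j l * offdiag j l = offdiag j l.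
Proof. by rewrite /offdiag /ind; case: (j == l); ring. Qed.

Lemma sum_offdiag : \big[Rplus/0]_j \big[Rplus/0]_l offdiag j l = INR n * (INR n - 1).
Proof.
rewrite -sum_const_R; apply: eq_bigr => j _.
transitivity (\big[Rplus/0]_(l < n) 1 + (-1) * \big[Rplus/0]_(l < n) (ind (l == j) * 1)).
  by rewrite big_distrr -big_split; apply: eq_bigr => l _; rewrite /offdiag eq_sym /=; ring.
by rewrite sum_ind_eq sum_const_R; ring.
Qed.

Lemma sum_offdiag_mul (F : 'I_n -> R) :
  \big[Rplus/0]_j \big[Rplus/0]_l (offdiag j l * (F j * F l)) =
  \big[Rplus/0]_j F j * \big[Rplus/0]_l F l - \big[Rplus/0]_j F j ^ 2.
Proof.
transitivity (\big[Rplus/0]_(j < n) \big[Rplus/0]_(l < n) (F j * F l)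
  + (-1) * \big[Rplus/0]_(j < n) \big[Rplus/0]_(l < n) (ind (l == j) * (F j * F l))).
  rewrite big_distrr -big_split; apply: eq_bigr => j _ /=.
  by rewrite big_distrr -big_split; apply: eq_bigr => l _ /=; rewrite /offdiag eq_sym; ring.
have -> : \big[Rplus/0]_(j < n) \big[Rplus/0]_(l < n) (ind (l == j) * (F j * F l)) =
          \big[Rplus/0]_j F j ^ 2.
  by apply: eq_bigr => j _; rewrite sum_ind_eq; ring.
have -> : \big[Rplus/0]_(j < n) \big[Rplus/0]_(l < n) (F j * F l) =
          \big[Rplus/0]_j F j * \big[Rplus/0]_l F l by rewrite big_distrlr.
ring.
Qed.

End Offdiagonal.

Section SecondMoments.
Variables (k n : nat) (p : 'I_k -> R) (eps : R).
Hypothesis p_dist : is_dist p.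

Local Notation E := (@Exp k n p eps).
Local Notation Z := (Zbit p eps).
Local Notation cov := (cov p eps).

Definition mu (x : 'I_k) : R := bit_mean p eps x - lam k eps.
Definition pairW (j l : 'I_n) (w : sample k n) : R := \big[Rplus/0]_x (Z j x w * Z l x w).
Definition linV (j : 'I_n) (w : sample k n) : R := \big[Rplus/0]_x (mu x * Z j x w).
Definition cov_sq : R := \big[Rplus/0]_x \big[Rplus/0]_y cov x y ^ 2.
Definition cov_mu : R := \big[Rplus/0]_x \big[Rplus/0]_y (mu x * mu y * cov x y).

Lemma Exp_pairW2 (j l j' l' : 'I_n) : j != l -> j' != l' ->
  E (fun w => pairW j l w * pairW j' l' w) =
  (ind (j' == j) * ind (l' == l) + ind (j' == l) * ind (l' == j)) * cov_sq.
Proof.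
move=> jl jl'; rewrite Exp_mul_sums /cov_sq big_distrr; apply: eq_bigr => x _.
rewrite big_distrr; apply: eq_bigr => y _; exact: Exp_Zbit4.
Qed.

Lemma Exp_pairW_linV (j l m : 'I_n) : j != l -> E (fun w => pairW j l w * linV m w) = 0.
Proof.
move=> jl; rewrite Exp_mul_sums big1 // => x _; rewrite big1 // => y _.
transitivity (E (fun w => mu y * (Z j x w * Z l x w * Z m y w))).
  by apply: eq_Exp => w; ring.
by rewrite ExpZ (Exp_Zbit3 _ p_dist) //; ring.
Qed.

Lemma Exp_linV2 (j m : 'I_n) : E (fun w => linV j w * linV m w) = ind (j == m) * cov_mu.
Proof.
rewrite Exp_mul_sums /cov_mu big_distrr; apply: eq_bigr => x _.
rewrite big_distrr; apply: eq_bigr => y _ /=.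
transitivity (E (fun w => mu x * mu y * (Z j x w * Z m y w))).
  by apply: eq_Exp => w; ring.
by rewrite ExpZ (Exp_Zbit2 _ p_dist); ring.
Qed.

Definition Aterm (w : sample k n) : R :=
  \big[Rplus/0]_j \big[Rplus/0]_l (offdiag j l * pairW j l w).
Definition Bterm (w : sample k n) : R := 2 * (INR n - 1) * \big[Rplus/0]_j linV j w.

Lemma Exp_offdiag_pairW2 (j l j' l' : 'I_n) :
  E (fun w => offdiag j l * pairW j l w * (offdiag j' l' * pairW j' l' w)) =
  offdiag j l * offdiag j' l' *
  ((ind (j' == j) * ind (l' == l) + ind (j' == l) * ind (l' == j)) * cov_sq).
Proof.
transitivity (E (fun w => offdiag j l * offdiag j' l' * (pairW j l w * pairW j' l' w))).
  by apply: eq_Exp => w; ring.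
rewrite ExpZ; case: (eqVneq j l) => [->|jl]; first by rewrite /offdiag /ind eqxx; ring.
case: (eqVneq j' l') => [->|jl']; first by rewrite /offdiag /ind eqxx; ring.
by rewrite Exp_pairW2 // /offdiag /ind (negbTE jl) (negbTE jl'); ring.
Qed.

Lemma Exp_Aterm2 : E (fun w => Aterm w * Aterm w) = 2 * INR n * (INR n - 1) * cov_sq.
Proof.
have inner (j l : 'I_n) : \big[Rplus/0]_(j' < n) \big[Rplus/0]_(l' < n)
    (offdiag j l * offdiag j' l' *
     ((ind (j' == j) * ind (l' == l) + ind (j' == l) * ind (l' == j)) * cov_sq))
    = 2 * cov_sq * offdiag j l.
  transitivity (offdiag j l * cov_sq *
    (\big[Rplus/0]_(j' < n) \big[Rplus/0]_(l' < n)
       (ind (j' == j) * ind (l' == l) * offdiag j' l')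
   + \big[Rplus/0]_(j' < n) \big[Rplus/0]_(l' < n)
       (ind (j' == l) * ind (l' == j) * offdiag j' l'))).
    rewrite -big_split big_distrr; apply: eq_bigr => j' _ /=.
    by rewrite -big_split big_distrr; apply: eq_bigr => l' _ /=; ring.
  rewrite !sum2_ind_eq (offdiag_sym j l).
  by rewrite -[in RHS](offdiag_idem j l); ring.
rewrite /Aterm Exp_mul_sums.
transitivity (\big[Rplus/0]_(j < n) \big[Rplus/0]_(l < n) (2 * cov_sq * offdiag j l)).
  apply: eq_bigr => j _; under eq_bigr do rewrite Exp_mul_sums.
  rewrite exchange_big; apply: eq_bigr => l _; rewrite -inner.
  by apply: eq_bigr => j' _; apply: eq_bigr => l' _; exact: Exp_offdiag_pairW2.
transitivity (2 * cov_sq * (INR n * (INR n - 1))); last ring.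
(* generalized so that big_distrr cannot unfold the sum behind cov_sq *)
rewrite -sum_offdiag; move: (2 * cov_sq) => c.
by rewrite big_distrr; under [RHS]eq_bigr do rewrite big_distrr.
Qed.

Lemma Exp_Aterm_Bterm : E (fun w => Aterm w * Bterm w) = 0.
Proof.
transitivity (E (fun w => 2 * (INR n - 1) * (Aterm w * \big[Rplus/0]_m linV m w))).
  by apply: eq_Exp => w; rewrite /Bterm; ring.
rewrite ExpZ /Aterm Exp_mul_sums big1 ?Rmult_0_r // => j _.
rewrite big1 // => m _; rewrite Exp_sum_mull big1 // => l _.
transitivity (E (fun w => offdiag j l * (pairW j l w * linV m w))).
  by apply: eq_Exp => w; ring.
rewrite ExpZ; case: (eqVneq j l) => [->|jl]; first by rewrite /offdiag /ind eqxx; ring.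
by rewrite Exp_pairW_linV //; ring.
Qed.

Lemma Exp_Bterm2 : E (fun w => Bterm w * Bterm w) = 4 * INR n * (INR n - 1) ^ 2 * cov_mu.
Proof.
transitivity (E (fun w => (2 * (INR n - 1)) ^ 2 *
  (\big[Rplus/0]_j linV j w * \big[Rplus/0]_m linV m w))).
  by apply: eq_Exp => w; rewrite /Bterm; ring.
rewrite ExpZ Exp_mul_sums.
transitivity ((2 * (INR n - 1)) ^ 2 * \big[Rplus/0]_(j < n) cov_mu); last first.
  by rewrite sum_const_R; ring.
congr (_ * _); apply: eq_bigr => j _.
under eq_bigr do rewrite Exp_linV2 eq_sym.
exact: sum_ind_eq.
Qed.

End SecondMoments.

Section Decomposition.
Variables (k n : nat) (p : 'I_k -> R) (eps : R).

Local Notation Z := (Zbit p eps).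
Local Notation q := (bit_mean p eps).
Local Notation mu := (mu p eps).

Lemma sum_Zbit (w : sample k n) (x : 'I_k) :
  \big[Rplus/0]_j Z j x w = Ncount w x - INR n * q x.
Proof.
transitivity (Ncount w x + \big[Rplus/0]_(j < n) (- q x)); last by rewrite sum_const_R; ring.
by rewrite /Ncount -big_split.
Qed.

Lemma sum_Zbit_sq (w : sample k n) (x : 'I_k) :
  \big[Rplus/0]_j Z j x w ^ 2 = Ncount w x * (1 - 2 * q x) + INR n * q x ^ 2.
Proof.
rewrite /Ncount big_distrl -sum_const_R -big_split /=; apply: eq_bigr => j _.
by rewrite /Zbit /cbit /bit /ind /=; case: (w.2 j x); ring.
Qed.

Lemma Tstat_decomp (w : sample k n) :
  Tstat eps w = INR n * (INR n - 1) * \big[Rplus/0]_(x < k) mu x ^ 2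
                + Aterm p eps w + Bterm p eps w.
Proof.
have -> : Aterm p eps w = \big[Rplus/0]_x
    ((Ncount w x - INR n * q x) ^ 2 - (Ncount w x * (1 - 2 * q x) + INR n * q x ^ 2)).
  transitivity (\big[Rplus/0]_(x < k) \big[Rplus/0]_(j < n) \big[Rplus/0]_(l < n)
                 (offdiag j l * (Z j x w * Z l x w))).
    rewrite exchange_big; apply: eq_bigr => j _ /=.
    rewrite exchange_big; apply: eq_bigr => l _ /=; exact: big_distrr.
  apply: eq_bigr => x _; rewrite sum_offdiag_mul sum_Zbit_sq sum_Zbit; ring.
have -> : Bterm p eps w = \big[Rplus/0]_x (2 * (INR n - 1) * mu x * (Ncount w x - INR n * q x)).
  rewrite /Bterm /linV exchange_big big_distrr; apply: eq_bigr => x _ /=.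
  by rewrite -sum_Zbit big_distrr big_distrr; apply: eq_bigr => j _ /=; ring.
rewrite /Tstat.
have -> : INR k * (INR n - 1) * lam k eps ^ 2 = \big[Rplus/0]_(x < k) ((INR n - 1) * lam k eps ^ 2).
  by rewrite sum_const_R; ring.
rewrite big_distrr -!big_split /=; apply: eq_bigr => x _ /=.
by rewrite /mu; ring.
Qed.

End Decomposition.

Lemma betaR_bounds e : 0 < betaR e < 1.
Proof.
have e_pos := exp_pos (e / 2); rewrite /betaR; split.
  by apply: Rinv_0_lt_compat; lra.
by rewrite -Rinv_1; apply: Rinv_lt_contravar; lra.
Qed.

Lemma alphaR_sq_le1 e : alphaR e ^ 2 <= 1.
Proof. by have := betaR_bounds e; rewrite alphaR_betaR; nra. Qed.

Lemma is_dist_bounds k (p : 'I_k -> R) (x : 'I_k) : is_dist p -> 0 <= p x <= 1.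
Proof.
case=> p_ge0 p_sum; split=> //; rewrite -p_sum (bigD1 x) //= -{1}[p x]Rplus_0_r.
by apply: Rplus_le_compat_l; apply: sum_ge0.
Qed.

Section Bounds.
Variables (k : nat) (p : 'I_k -> R) (eps : R).
Hypothesis p_dist : is_dist p.

Local Notation alpha := (alphaR eps).
Local Notation q := (bit_mean p eps).
Local Notation cov := (cov p eps).
Local Notation mu := (mu p eps).

Lemma bit_mean_bounds (x : 'I_k) : 0 <= q x <= 1.
Proof.
have := betaR_bounds eps; have := is_dist_bounds x p_dist.
by rewrite /bit_mean alphaR_betaR; split; nra.
Qed.

Lemma cov_diag_bound (x : 'I_k) : 0 <= q x - q x ^ 2 + alpha ^ 2 * p x ^ 2 <= 2.
Proof.
have := bit_mean_bounds x; have := is_dist_bounds x p_dist; have := alphaR_sq_le1 eps.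
split; nra.
Qed.

Lemma cov_sq_le_ind (x y : 'I_k) : cov x y ^ 2 <= ind (y == x) + p x * p y.
Proof.
have [px0 px1] := is_dist_bounds x p_dist; have [py0 py1] := is_dist_bounds y p_dist.
have a1 := alphaR_sq_le1 eps; have a0 : 0 <= alpha ^ 2 by apply: pow2_ge_0.
rewrite (covE _ p_dist) /ind eq_sym; case: (eqVneq x y) => [<-|xy].
  have [q0 q1] := bit_mean_bounds x; nra.
have pp : 0 <= p x * p y <= 1 by split; nra.
have : 0 <= alpha ^ 2 * p x * p y <= p x * p y by split; nra.
nra.
Qed.

Lemma cov_sq_le : (0 < k)%N -> cov_sq p eps <= 2 * INR k.
Proof.
move=> k_gt0; have k_ge1 : 1 <= INR k by apply: (le_INR 1); apply/leP.
apply: Rle_trans (ler_sum (fun x => ler_sum (cov_sq_le_ind x))) _.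
have -> : \big[Rplus/0]_(x < k) \big[Rplus/0]_(y < k) (ind (y == x) + p x * p y)
          = \big[Rplus/0]_(x < k) (1 + p x).
  apply: eq_bigr => x _; rewrite big_split /= -big_distrr /= (sum_p p_dist) Rmult_1_r.
  congr (_ + _); rewrite -[RHS](sum_ind_eq x (fun _ => 1)).
  by apply: eq_bigr => y _; rewrite Rmult_1_r.
by rewrite big_split /= sum_const_R (sum_p p_dist); lra.
Qed.

Lemma cov_mu_le : cov_mu p eps <= 2 * \big[Rplus/0]_(x < k) mu x ^ 2.
Proof.
pose D x := q x - q x ^ 2 + alpha ^ 2 * p x ^ 2.
set S := \big[Rplus/0]_(y < k) (mu y * p y).
have -> : cov_mu p eps = \big[Rplus/0]_(x < k) (mu x ^ 2 * D x) - alpha ^ 2 * (S * S).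
  transitivity (\big[Rplus/0]_(x < k) (mu x ^ 2 * D x + (- alpha ^ 2 * mu x * p x) * S)).
    apply: eq_bigr => x _; rewrite /S big_distrr /=.
    transitivity (\big[Rplus/0]_(y < k) (ind (y == x) * (mu x * mu y * D x)
                   + (- alpha ^ 2 * mu x * p x) * (mu y * p y))).
      by apply: eq_bigr => y _; rewrite (covE _ p_dist) eq_sym /D; ring.
    by rewrite big_split /= sum_ind_eq; congr (_ + _); ring.
  rewrite big_split.
  have -> : \big[Rplus/0]_(x < k) (- alpha ^ 2 * mu x * p x * S) = - (alpha ^ 2 * (S * S)).
    rewrite Ropp_mult_distr_l -Rmult_assoc -big_distrl /=; congr (_ * _).
    by rewrite /S big_distrr; apply: eq_bigr => x _ /=; ring.
  by [].
have : \big[Rplus/0]_(x < k) (mu x ^ 2 * D x) <= 2 * \big[Rplus/0]_(x < k) mu x ^ 2.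
  rewrite big_distrr; apply: ler_sum => x /=.
  by have := cov_diag_bound x; have := pow2_ge_0 (mu x); rewrite /D; nra.
by have := pow2_ge_0 alpha; have := pow2_ge_0 S; nra.
Qed.

End Bounds.

Lemma sum_mu_sq k (p : 'I_k -> R) eps :
  \big[Rplus/0]_(x < k) mu p eps x ^ 2 = alphaR eps ^ 2 * dist2_unif p.
Proof.
rewrite /dist2_unif big_distrr; apply: eq_bigr => x _ /=.
by rewrite /mu /bit_mean /lam /Rdiv; ring.
Qed.

Lemma Exp_Tstat_dev2 k n (p : 'I_k -> R) eps : is_dist p ->
  Exp p eps (fun w : sample k n =>
    (Tstat eps w - INR n * (INR n - 1) * \big[Rplus/0]_(x < k) mu p eps x ^ 2) ^ 2) =
  2 * INR n * (INR n - 1) * cov_sq p eps + 4 * INR n * (INR n - 1) ^ 2 * cov_mu p eps.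
Proof.
move=> p_dist.
transitivity (Exp p eps (fun w : sample k n => Aterm p eps w * Aterm p eps w +
  (2 * (Aterm p eps w * Bterm p eps w) + Bterm p eps w * Bterm p eps w))).
  by apply: eq_Exp => w; rewrite (Tstat_decomp p); ring.
by rewrite !ExpD ExpZ Exp_Aterm2 // Exp_Aterm_Bterm // Exp_Bterm2 //; ring.
Qed.

Lemma INR_mul_sub1_ge0 n : 0 <= INR n * (INR n - 1).
Proof. by case: n => [|m]; rewrite ?S_INR /=; [lra | have := pos_INR m; nra]. Qed.

Lemma moment_bound_arith (N K F Q a d : R) :
  0 <= N -> 0 <= N * (N - 1) -> 0 <= K -> 0 <= a -> 0 <= d ->
  F <= 2 * K -> Q <= 2 * (a * d) ->
  2 * N * (N - 1) * F + 4 * N * (N - 1) ^ 2 * Q <= 4 * K * N ^ 2 + 8 * N ^ 3 * a * d.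
Proof.
move=> N0 NN K0 a0 d0 FK Qad.
(* RHS - LHS = 2N(N-1)(2K-F) + 4N(N-1)^2(2ad-Q) + 4KN + 8ad(N^2 + N(N-1)) *)
have F' : 0 <= 2 * K - F by lra.
have Q' : 0 <= 2 * (a * d) - Q by lra.
have := Rmult_le_pos _ _ NN F'.
have := Rmult_le_pos _ _ (Rmult_le_pos _ _ N0 (pow2_ge_0 (N - 1))) Q'.
have := Rmult_le_pos _ _ K0 N0.
have := Rmult_le_pos _ _ (Rmult_le_pos _ _ a0 d0) (Rplus_le_le_0_compat _ _ (pow2_ge_0 N) NN).
nra.
Qed.

Unset Implicit Arguments.
Theorem lemma3p3 (k n : nat) (p : 'I_k -> R) (eps : R) :
  (0 < k)%N -> 0 < eps -> is_dist p ->
  Var p eps (@Tstat k n eps)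
    <= 4 * INR k * INR n ^ 2 + 8 * INR n ^ 3 * alphaR eps ^ 2 * dist2_unif p.
Proof.
(* Only alphaR eps ^ 2 enters, so the bound holds for every eps. *)
move=> k_gt0 _ p_dist.
set c := INR n * (INR n - 1) * \big[Rplus/0]_(x < k) mu p eps x ^ 2.
apply: Rle_trans (Var_le_Exp_sq_dev _ c (Exp1 n eps p_dist)) _.
rewrite /c Exp_Tstat_dev2 //; apply: moment_bound_arith.
- exact: pos_INR.
- exact: INR_mul_sub1_ge0.
- exact: pos_INR.
- exact: pow2_ge_0.
- by apply: sum_ge0 => x _; apply: pow2_ge_0.
- exact: cov_sq_le.
- by rewrite -sum_mu_sq; apply: cov_mu_le.
Qed.
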